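(* Let $\square$ be a category with $\Delta_1[\tau]^*\subset\square\subset\mathbf{Pos}$ subcategories, $\Delta_1[\tau]^*$ wide in $\square$. For a monotone function $\phi:P_1\to P_2$ between posets the following are equivalent: (1) there exists a unique morphism of presheaves $\square[\phi]:\square[P_1]\to\square[P_2]$ such that $\iota_{P_2}\circ\square[\phi]=\mathrm{ner}_\square(\phi)\circ\iota_{P_1}$, where $\iota_{P}:\square[P]\hookrightarrow\mathrm{ner}_\square P$ are the inclusions; (2) for each finite Boolean interval $I$ of $P_1$, the restriction of $\phi$ to $I$ corestricts to a monotone function $I\to J$, $J$ a Boolean interval of $P_2$, which is isomorphic in the arrow category $\mathbf{Pos}^{[1]}$ to a $\square$-morphism.
   Context: $[1]=\{0<1\}$, $[1]^n$ the product poset ($[1]^0=[0]$). $\tau:[1]^2\to[1]^2$, $\tau(x,y)=(y,x)$. $\Delta_1[\tau]^*$ is the smallest subcategory of $\mathbf{Set}$ containing all functions between $[0]$ and $[1]$ and $\tau$, and closed under Cartesian products of functions; its objects are the $[1]^n$; ''wide'' means $\square$ has the same objects. $\mathbf{Pos}$ is the category of posets and monotone maps. An interval in a poset $P$ is a non-empty subset $[x,z]_P=\{y:x\leq y\leq z\}$; it is a Boolean interval if it is a Boolean lattice (for finite ones: isomorphic to some $[1]^k$). A cubical set is a presheaf $\square^{op}\to\mathbf{Set}$. For a poset $P$, $\mathrm{ner}_\square P$ is the cubical set $[1]^n\mapsto\mathbf{Pos}([1]^n,P)$ (action by precomposition), and $\square[P]\subseteq\mathrm{ner}_\square P$ is the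 subpresheaf of those monotone $\theta:[1]^n\to P$ whose image lies in a Boolean interval $I$ of $P$ such that the corestriction $[1]^n\to I$ is isomorphic, under $[1]^n$ (i.e. after composing with a poset isomorphism $I\cong[1]^k$), to a $\square$-morphism. Two monotone maps $f:A\to B$, $f':A'\to B'$ are isomorphic in $\mathbf{Pos}^{[1]}$ if there are poset isomorphisms $A\cong A'$, $B\cong B'$ intertwining them. *)

From HB Require Import structures.
From mathcomp Require Import all_boot all_order.
Unset Printing Implicit Defensive.
Import Order.Theory.
Local Open Scope order_scope.

(* The poset [1]^n, represented as boolean vectors of length n ([1]^0 = [0]). *)
Definition cube (n : nat) := {ffun 'I_n -> bool}.

Definition cle n (a b : cube n) : bool := [forall i, a i ==> b i].
Arguments cle {n} a b.

(* Cartesian product of maps [1]^a -> [1]^b and [1]^c -> [1]^d, under the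
   identification [1]^a x [1]^c = [1]^(a+c) by concatenation of coordinates. *)
Definition cube_prod a b c d (f : cube a -> cube b) (g : cube c -> cube d)
  : cube (a + c) -> cube (b + d) :=
  fun x =>
    let xl : cube a := [ffun j => x (lshift c j)] in
    let xr : cube c := [ffun j => x (rshift a j)] in
    [ffun i => match split i with inl j => f xl j | inr j => g xr j end].
Arguments cube_prod {a b c d} f g.

Definition cube_tau : cube 2 -> cube 2 := fun x => [ffun i => x (rev_ord i)].

(* Delta_1[tau]^* : the smallest subcategory containing all (monotone) maps
   between [0] and [1] and tau, closed under Cartesian products. *)
Inductive D1tau : forall m n, (cube m -> cube n) -> Prop :=
| D1_id n : @D1tau n n (fun x => x)
| D1_face (b : bool) : @D1tau 0 1 (fun _ => [ffun _ => b])
| D1_degen : @D1tau 1 0 (fun _ => [ffun _ => false])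
| D1_tau : @D1tau 2 2 cube_tau
| D1_comp m n p (f : cube m -> cube n) (g : cube n -> cube p) :
    @D1tau m n f -> @D1tau n p g -> @D1tau m p (fun x => g (f x))
| D1_prod a b c d (f : cube a -> cube b) (g : cube c -> cube d) :
    @D1tau a b f -> @D1tau c d g -> @D1tau (a + c) (b + d) (cube_prod f g).
Arguments D1tau {m n} f.

(* A category "square" with Delta_1[tau]^* (wide) <= square <= Pos: its objects
   are the [1]^n, its morphisms are given by the predicate Sq. *)
Definition cube_cat (Sq : forall m n, (cube m -> cube n) -> Prop) : Prop :=
  [/\ (forall m n (f : cube m -> cube n), D1tau f -> Sq m n f),
      (forall m n (f : cube m -> cube n), Sq m n f ->
          forall a b, cle a b -> cle (f a) (f b)) &
      (forall m n p (f : cube m -> cube n) (g : cube n -> cube p),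
          Sq m n f -> Sq n p g -> Sq m p (fun x => g (f x)))].

Section Posets.
Context {d : Order.disp_t} {T : porderType d}.

(* alpha restricts to a poset isomorphism from the interval [x,z] onto [1]^k
   (so [x,z] is a non-empty finite Boolean interval). *)
Definition interval_iso (x z : T) k (alpha : T -> cube k) : Prop :=
  (forall y y', x <= y <= z -> x <= y' <= z -> (y <= y') = cle (alpha y) (alpha y'))
  /\ (forall c, exists y, x <= y <= z /\ alpha y = c).
Arguments interval_iso x z {k} alpha.

Definition in_sqP (Sq : forall m n, (cube m -> cube n) -> Prop) n
    (theta : cube n -> T) : Prop :=
  (forall a b, cle a b -> theta a <= theta b) /\
  exists (x z : T) (k : nat) (alpha : T -> cube k),
    [/\ interval_iso x z alpha,
        (forall a, x <= theta a <= z) &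
        Sq n k (fun a => alpha (theta a))].

Arguments in_sqP Sq {n} theta.
Definition sq_el Sq n := {theta : cube n -> T | in_sqP Sq theta}.
End Posets.

Arguments sq_el {d} T Sq n.
Arguments interval_iso {d T} x z {k} alpha.
Arguments in_sqP {d T} Sq {n} theta.

Section Morphisms.
Context (Sq : forall m n, (cube m -> cube n) -> Prop).
Context {d1 d2 : Order.disp_t} {P1 : porderType d1} {P2 : porderType d2}.

Definition sq_natural (F : forall n, sq_el P1 Sq n -> sq_el P2 Sq n) : Prop :=
  forall m n (g : cube m -> cube n), Sq m n g ->
  forall (th : sq_el P1 Sq n) (th' : sq_el P1 Sq m),
    (forall a, sval th' a = sval th (g a)) ->
    forall a, sval (F m th') a = sval (F n th) (g a).

(* iota_{P2} o F = ner(phi) o iota_{P1}. *)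
Definition sq_over (phi : P1 -> P2) (F : forall n, sq_el P1 Sq n -> sq_el P2 Sq n)
  : Prop := forall n (th : sq_el P1 Sq n) a, sval (F n th) a = phi (sval th a).

Definition sq_lift_unique (phi : P1 -> P2) : Prop :=
  exists F : forall n, sq_el P1 Sq n -> sq_el P2 Sq n,
    [/\ sq_natural F, sq_over phi F &
        forall F' : forall n, sq_el P1 Sq n -> sq_el P2 Sq n,
          sq_natural F' -> sq_over phi F' -> forall n th, F' n th = F n th].

Definition sq_local (phi : P1 -> P2) : Prop :=
  forall (x z : P1) m (alpha : P1 -> cube m), interval_iso x z alpha ->
  exists (x' z' : P2) (m' k : nat) (alpha' : P1 -> cube m') (beta : P2 -> cube k)
         (h : cube m' -> cube k),
    [/\ interval_iso x z alpha', interval_iso x' z' beta,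
        (forall y, x <= y <= z -> x' <= phi y <= z'),
        Sq m' k h &
        forall y, x <= y <= z -> beta (phi y) = h (alpha' y)].
End Morphisms.

From HB Require Import structures.
From mathcomp Require Import all_boot all_order all_fingroup.
From Stdlib Require Import FunctionalExtensionality ProofIrrelevance.
Import Order.Theory.
Local Open Scope order_scope.

(* A lift of phi compatible with the inclusions into the nerves can only be
   postcomposition with phi, so (1) holds exactly when phi \o theta lies in
   square[P2] for every theta in square[P1].  Every such theta factors through a
   chart [x,z] ~ [1]^k of a Boolean interval, and the inverse of every chart is
   in square[P1]; hence the condition can be checked on charts, which is (2).
   The choice of chart does not matter: two charts of one interval differ by an
   order automorphism of [1]^k, which sends atoms to atoms and is therefore a
   permutation of coordinates, and every such permutation is a composite of
   products of tau with identities. *)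

Lemma D1tau_ext m n (f g : cube m -> cube n) : D1tau f -> f =1 g -> D1tau g.
Proof. by move=> Df /functional_extensionality <-. Qed.
Arguments D1tau_ext {m n f g}.

Definition cube_perm n (s : 'I_n -> 'I_n) (a : cube n) : cube n := [ffun j => a (s j)].
Arguments cube_perm {n} s a.

Lemma D1tau_cube_perm_comp n (s t : 'I_n -> 'I_n) :
  D1tau (cube_perm s) -> D1tau (cube_perm t) -> D1tau (cube_perm (s \o t)).
Proof.
move=> Ds Dt; apply: (D1tau_ext (D1_comp _ _ _ _ _ Ds Dt)) => a.
by apply/ffunP => j; rewrite !ffunE.
Qed.
Arguments D1tau_cube_perm_comp {n s t}.

Lemma D1tau_cube_perm_tperm01 k :
  D1tau (cube_perm (tperm (ord0 : 'I_k.+2) (lift ord0 ord0))).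
Proof.
apply: (D1tau_ext (D1_prod _ _ _ _ _ _ D1_tau (D1_id k))) => x.
apply/ffunP => i; rewrite /cube_prod /cube_tau !ffunE.
case: splitP => j Hij; rewrite !ffunE; congr (x _); apply: val_inj => /=.
- case: j Hij => -[|[|//]] ? /= Hij.
  + have -> : i = ord0 by apply: val_inj.
    by rewrite tpermL.
  + have -> : i = lift ord0 ord0 by apply: val_inj.
    by rewrite tpermR.
- by rewrite tpermD // -val_eqE /= Hij.
Qed.

Lemma D1tau_cube_perm_fix0 k :
  (forall s : 'I_k -> 'I_k, injective s -> D1tau (cube_perm s)) ->
  forall s : 'I_k.+1 -> 'I_k.+1, injective s -> s ord0 = ord0 -> D1tau (cube_perm s).
Proof.
move=> IH s s_inj s0.
pose s' j := odflt j (unlift ord0 (s (lift ord0 j))).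
have s'E j : lift ord0 (s' j) = s (lift ord0 j).
  rewrite /s'; case: unliftP => [j' -> //| sj0].
  by move: (neq_lift ord0 j); rewrite -(inj_eq s_inj) s0 sj0 eqxx.
have s'_inj : injective s'.
  by move=> a b /(congr1 (lift ord0)); rewrite !s'E => /s_inj /lift_inj.
have D := D1_prod _ _ _ _ _ _ (D1_id 1) (IH _ s'_inj).
apply: (D1tau_ext D) => x; apply/ffunP => i; rewrite /cube_prod !ffunE.
case: splitP => j Hij; rewrite !ffunE; congr (x _).
- have -> : i = ord0 by apply: val_inj; rewrite /= Hij; case: j {Hij} => -[].
  by rewrite s0 (ord1 j); apply: val_inj.
- have -> : i = lift ord0 j by apply: val_inj; rewrite /= Hij.
  by rewrite -s'E; apply: val_inj.
Qed.
Arguments D1tau_cube_perm_fix0 {k} IH {s}.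

(* The transposition (j 0) is the conjugate of (0 1) by (1 j), which fixes 0. *)
Lemma D1tau_cube_perm_tperm0 k :
  (forall s : 'I_k.+1 -> 'I_k.+1, injective s -> D1tau (cube_perm s)) ->
  forall j : 'I_k.+2, j != ord0 -> D1tau (cube_perm (tperm j ord0)).
Proof.
move=> IH j j0; pose r := tperm (lift ord0 ord0) j.
have r0 : r ord0 = ord0 by rewrite tpermD // eq_sym.
have Dr : D1tau (cube_perm r) := D1tau_cube_perm_fix0 IH (@perm_inj _ r) r0.
have rE i : tperm j ord0 i = r (tperm ord0 (lift ord0 ord0) (r i)).
  have := congr1 (fun p : {perm _} => p i) (tpermJ ord0 (lift ord0 ord0) r).
  by rewrite conjgE tpermV !permM r0 tpermL => ->; rewrite tpermC.
have D := D1tau_cube_perm_comp (D1tau_cube_perm_comp Dr (D1tau_cube_perm_tperm01 k)) Dr.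
by apply: (D1tau_ext D) => a; apply/ffunP => i; rewrite !ffunE rE.
Qed.
Arguments D1tau_cube_perm_tperm0 {k} IH {j}.

Lemma D1tau_cube_perm n (s : 'I_n -> 'I_n) : injective s -> D1tau (cube_perm s).
Proof.
elim: n s => [|k IH] s s_inj.
  by apply: (D1tau_ext (D1_id 0)) => a; apply/ffunP => -[].
have [s0|s0] := eqVneq (s ord0) ord0; first exact: (D1tau_cube_perm_fix0 IH s_inj s0).
case: k IH s s_inj s0 => [|k] IH s s_inj s0; first by rewrite ord1 eqxx in s0.
pose t := tperm (s ord0) ord0 \o s.
have t_inj : injective t by move=> a b /perm_inj /s_inj.
have t0 : t ord0 = ord0 by rewrite /t /= tpermL.
have Dt := D1tau_cube_perm_fix0 IH t_inj t0.
have D := D1tau_cube_perm_comp (D1tau_cube_perm_tperm0 IH s0) Dt.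
by apply: (D1tau_ext D) => a; apply/ffunP => j; rewrite !ffunE /t /= tpermK.
Qed.
Arguments D1tau_cube_perm {n s}.

Definition cube_bot k : cube k := [ffun _ => false].
Definition cube_atom k (i : 'I_k) : cube k := [ffun j => j == i].
Arguments cube_atom {k} i.

Lemma cle_refl k (a : cube k) : cle a a.
Proof. by apply/forallP => i; apply/implyP. Qed.

Lemma cle_anti k (a b : cube k) : cle a b -> cle b a -> a = b.
Proof.
move=> /forallP ab /forallP ba; apply/ffunP => i.
by move: (ab i) (ba i); case: (a i); case: (b i).
Qed.

Lemma cle_bot k (b : cube k) : cle (cube_bot k) b.
Proof. by apply/forallP => i; rewrite ffunE. Qed.

Lemma cle_atom k (i : 'I_k) (b : cube k) : cle (cube_atom i) b = b i.
Proof.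
apply/forallP/idP => [/(_ i)|bi j]; first by rewrite ffunE eqxx.
by rewrite ffunE; apply/implyP => /eqP ->.
Qed.

Lemma cube_atom_neq_bot k (i : 'I_k) : cube_atom i != cube_bot k.
Proof. by apply/negP => /eqP /(congr1 (fun b : cube k => b i)); rewrite !ffunE eqxx. Qed.
Arguments cube_atom_neq_bot {k} i.

Lemma cube_atom_inj k : injective (@cube_atom k).
Proof.
move=> i j /(congr1 (fun b : cube k => b i)).
by rewrite !ffunE eqxx => /esym /eqP.
Qed.

Lemma cle_atomr k (j : 'I_k) (b : cube k) :
  cle b (cube_atom j) -> b = cube_bot k \/ b = cube_atom j.
Proof.
move=> /forallP bj; case bjj: (b j); [right | left]; apply/ffunP => l;
  move: (bj l); rewrite !ffunE; case: eqP => [->|_]; rewrite ?bjj //; by case: (b l).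
Qed.

(* An order isomorphism between cubes permutes coordinates: it sends atoms to atoms. *)
Section CubeIso.
Variables (k m : nat) (g : cube k -> cube m).
Hypothesis g_cle : forall c c', cle (g c) (g c') = cle c c'.
Hypothesis g_surj : forall e, exists c, g c = e.

Lemma cube_iso_inj : injective g.
Proof. by move=> a b gab; apply: cle_anti; rewrite -g_cle gab cle_refl. Qed.

Lemma cube_iso_bot : g (cube_bot k) = cube_bot m.
Proof.
have [c gc] := g_surj (cube_bot m).
by apply: cle_anti; [rewrite -gc g_cle | ]; apply: cle_bot.
Qed.

Lemma cube_iso_atom (j : 'I_m) : exists i, g (cube_atom i) = cube_atom j.
Proof.
have [c gc] := g_surj (cube_atom j).
have [i ci] : exists i, c i.
  case: (pickP c) => [i ci | c0]; first by exists i.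
  have c_bot : c = cube_bot k by apply/ffunP => i; rewrite ffunE c0.
  by move: (cube_atom_neq_bot j); rewrite -gc c_bot cube_iso_bot eqxx.
exists i; have : cle (g (cube_atom i)) (cube_atom j) by rewrite -gc g_cle cle_atom.
case/cle_atomr => // gi0; have := cube_atom_neq_bot i.
by rewrite -(inj_eq cube_iso_inj) gi0 cube_iso_bot eqxx.
Qed.

Lemma D1tau_cube_iso : D1tau g.
Proof.
have [t tE] := fin_all_exists cube_iso_atom.
have t_inj : injective t.
  by move=> i j tij; apply: cube_atom_inj; rewrite -!tE tij.
have km : k = m.
  apply/eqP; rewrite eqn_leq -(@leq_exp2l 2) //.
  have := leq_card t t_inj; rewrite !card_ord => -> ; rewrite andbT.
  by have := leq_card g cube_iso_inj; rewrite !card_ffun !card_bool !card_ord.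
subst m; have D := D1tau_cube_perm t_inj.
apply: (D1tau_ext D) => a.
by apply/ffunP => j; rewrite ffunE -[LHS]cle_atom -g_cle tE cle_atom.
Qed.
End CubeIso.

Section IntervalCharts.
Context {d : Order.disp_t} {T : porderType d}.

Lemma interval_iso_inj {x z : T} {k} {alpha : T -> cube k} {y y'} :
  interval_iso x z alpha -> x <= y <= z -> x <= y' <= z -> alpha y = alpha y' -> y = y'.
Proof.
move=> [alpha_le _] y_in y'_in ayy'; apply/le_anti.
by rewrite (alpha_le y y') // (alpha_le y' y) // ayy' cle_refl.
Qed.

Lemma interval_iso_section {x z : T} {k} {alpha : T -> cube k} :
  interval_iso x z alpha ->
  exists th : cube k -> T, (forall c, x <= th c <= z /\ alpha (th c) = c) /\
                           (forall y, x <= y <= z -> th (alpha y) = y).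
Proof.
move=> iso_alpha; have [_ alpha_surj] := iso_alpha.
have [th thE] := fin_all_exists alpha_surj; exists th; split=> [c|y y_in].
  by have [] := thE c.
by apply: (interval_iso_inj iso_alpha (thE _).1 y_in (thE _).2).
Qed.

Lemma interval_iso_transition {x z : T} {k m} {alpha : T -> cube k} {alpha' : T -> cube m} :
  interval_iso x z alpha -> interval_iso x z alpha' ->
  exists g : cube k -> cube m,
    D1tau g /\ forall y, x <= y <= z -> alpha' y = g (alpha y).
Proof.
move=> iso_alpha iso_alpha'; have [th [thE thK]] := interval_iso_section iso_alpha.
exists (alpha' \o th); split; last by move=> y y_in /=; rewrite thK.
apply: D1tau_cube_iso => [c c' | e] /=.
  case: iso_alpha iso_alpha' => [alpha_le _] [alpha'_le _].
  by rewrite -alpha'_le ?(thE _).1 // alpha_le ?(thE _).1 // !(thE _).2.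
have [_ alpha'_surj] := iso_alpha'; have [y [y_in <-]] := alpha'_surj e.
by exists (alpha y); rewrite /= thK.
Qed.
End IntervalCharts.

Section SquareNerve.
Variable Sq : forall m n, (cube m -> cube n) -> Prop.
Hypothesis HSq : cube_cat Sq.

Lemma sq_of_D1tau {m n} {f : cube m -> cube n} : D1tau f -> Sq m n f.
Proof. by case: HSq => D1_sq _ _; apply: D1_sq. Qed.

Lemma sq_comp {m n p} {f : cube m -> cube n} {g : cube n -> cube p} :
  Sq m n f -> Sq n p g -> Sq m p (g \o f).
Proof. by case: HSq => _ _ comp_sq; apply: comp_sq. Qed.

Lemma interval_section_in_sq {d} {T : porderType d} {x z : T} {k}
    {alpha : T -> cube k} {th : cube k -> T} :
  interval_iso x z alpha -> (forall c, x <= th c <= z /\ alpha (th c) = c) ->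
  in_sqP Sq th.
Proof.
move=> iso_alpha thE; split.
  move=> a b ab; case: (iso_alpha) => alpha_le _.
  by rewrite alpha_le ?(thE _).1 // !(thE _).2.
exists x, z, k, alpha; split=> // [c|]; first exact: (thE c).1.
apply: sq_of_D1tau; apply: (D1tau_ext (D1_id k)) => c.
by rewrite (thE c).2.
Qed.

Section SquareMaps.
Context {d1 d2 : Order.disp_t} {P1 : porderType d1} {P2 : porderType d2}.
Variable phi : P1 -> P2.

Definition sq_preserving : Prop :=
  forall n (th : sq_el P1 Sq n), in_sqP Sq (phi \o sval th).

Lemma sq_lift_uniqueP : sq_lift_unique Sq phi <-> sq_preserving.
Proof.
split=> [[F [_ F_over _]] n th | phi_sq].
  have -> : phi \o sval th = sval (F n th).
    by apply: functional_extensionality => a; rewrite F_over.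
  exact: proj2_sig.
exists (fun n th => exist _ _ (phi_sq n th)); split=> // [m n g _ th th' th'E a|].
  by rewrite /= th'E.
move=> F' _ F'_over n th; case F'th: (F' n th) => [f f_sq].
have fE : f = phi \o sval th.
  by apply: functional_extensionality => a; rewrite /= -F'_over F'th.
by subst f; congr exist; apply: proof_irrelevance.
Qed.

Lemma sq_preserving_local : sq_preserving -> sq_local Sq phi.
Proof.
move=> phi_sq x z m alpha iso_alpha.
have [th [thE thK]] := interval_iso_section iso_alpha.
have [_ [x' [z' [k [beta [iso_beta phi_in beta_sq]]]]]] :=
  phi_sq m (exist _ th (interval_section_in_sq iso_alpha thE)).
exists x', z', m, k, alpha, beta, (fun c => beta (phi (th c))); split=> //.
  by move=> y y_in; rewrite -(thK y y_in); apply: phi_in.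
by move=> y y_in; rewrite thK.
Qed.

Lemma sq_local_preserving :
  {homo phi : y y' / y <= y'} -> sq_local Sq phi -> sq_preserving.
Proof.
move=> phi_le phi_loc n [th [th_le [x [z [k [alpha [iso_alpha th_in alpha_sq]]]]]]] /=.
split=> [a b ab|]; first by apply: phi_le; apply: th_le.
have [x' [z' [m [k' [alpha' [beta [h [iso_alpha' iso_beta phi_in h_sq hE]]]]]]]] :=
  phi_loc x z k alpha iso_alpha.
have [g [g_D1 gE]] := interval_iso_transition iso_alpha iso_alpha'.
exists x', z', k', beta; split=> // [a|]; first by apply: phi_in.
have -> : (fun a => beta (phi (th a))) = h \o (g \o (alpha \o th)).
  by apply: functional_extensionality => a /=; rewrite hE // gE.
exact: sq_comp (sq_comp alpha_sq (sq_of_D1tau g_D1)) h_sq.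
Qed.
End SquareMaps.
End SquareNerve.

Theorem mainTheorem13 (Sq : forall m n, (cube m -> cube n) -> Prop)
  (HSq : cube_cat Sq)
  (d1 d2 : Order.disp_t) (P1 : porderType d1) (P2 : porderType d2)
  (phi : P1 -> P2) (Hphi : {homo phi : x y / x <= y}) :
  sq_lift_unique Sq phi <-> sq_local Sq phi.
Proof.
apply: iff_trans (sq_lift_uniqueP Sq phi) _.
split; [exact: sq_preserving_local | exact: sq_local_preserving].
Qed.
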